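(* Let $k\in\mathbb Z$ and $u_0\in\Sigma^1_k$. Suppose there exist $T>0$ and a solution $u\in C^1([0,T),\Lambda^1_k)$ of $u_{xt}=\sin(u)$ with $u(0)=u_0$. Then \[ K_1(u_0):=\int_0^1\cos(u_0)\,\partial_x^{-1}\sin(u_0)\,dx=0 . \]
   Context: $\mathbb T=\mathbb R/\mathbb Z$, $H^m=H^m(\mathbb T,\mathbb R)$, $H_0^m$ is its mean-zero subspace, and $\partial_x^{-1}$ is the mean-zero antiderivative. For $k\in\mathbb Z$, $\Lambda^m_k$ is the set of $u:\mathbb R\to\mathbb R$ of the form $u(x)=2\pi kx+\mathring u(x)+c$ with $\mathring u\in H_0^m$ ($1$-periodically extended) and $c\in\mathbb R/2\pi\mathbb Z$. We set \[ \Sigma^1_k=\Big\{u\in\Lambda^1_k:\int_0^1\sin u\,dx=0=\int_0^1\cos u\,dx\Big\}. \] For $u\in\Sigma^1_k$, $\sin u$ is $1$-periodic with mean zero, so $\partial_x^{-1}\sin u$ is defined. A solution $u\in C^1([0,T),\Lambda^1_k)$ means a $C^1$ curve with $\partial_t u(t)\in H^1$ and $\partial_x\partial_t u(t)=\sin(u(t))$ for all $t$. *)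

From HB Require Import structures.
From mathcomp Require Import all_boot all_order all_algebra.
From mathcomp Require Import all_classical all_reals all_analysis.
Set Implicit Arguments. Unset Strict Implicit. Unset Printing Implicit Defensive.
Import Order.TTheory GRing.Theory Num.Theory.
Import numFieldNormedType.Exports.
Local Open Scope classical_set_scope.
Local Open Scope ring_scope.

Section Defs.
Variable R : realType.
Local Notation leb := (@lebesgue_measure R).

Definition Rint (a b : R) (f : R -> R) : R := \int[leb]_(x in `[a, b]) f x.

Definition L2_01 (g : R -> R) : Prop :=
  measurable_fun `[(0:R), 1] g /\
  leb.-integrable `[(0:R), 1] (EFin \o g) /\
  leb.-integrable `[(0:R), 1] (EFin \o (fun x => g x ^+ 2)).

Definition wderiv (f g : R -> R) : Prop :=
  L2_01 g /\ forall x, 0 <= x <= 1 -> f x = f 0 + Rint 0 x g.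

(** f (a 1-periodic function on R) is (the continuous representative of) an
    element of H^1(T). *)
Definition H1 (f : R -> R) : Prop :=
  (forall x, f (x + 1) = f x) /\ exists g, wderiv f g.

Definition h1_lt (f : R -> R) (e : R) : Prop :=
  exists g, wderiv f g /\ Rint 0 1 (fun x => f x ^+ 2) + Rint 0 1 (fun x => g x ^+ 2) < e ^+ 2.

(** Lambda^1_k : u(x) = 2 pi k x + (H^1 function); the constant c is lifted to R. *)
Definition Lambda1 (k : int) (u : R -> R) : Prop :=
  H1 (fun x => u x - 2 * pi * k%:~R * x).

Definition Sigma1 (k : int) (u : R -> R) : Prop :=
  Lambda1 k u /\ Rint 0 1 (fun x => sin (u x)) = 0 /\ Rint 0 1 (fun x => cos (u x)) = 0.

(** mean-zero antiderivative on [0,1] *)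
Definition antider0 (f : R -> R) (x : R) : R :=
  Rint 0 x f - Rint 0 1 (fun y => Rint 0 y f).

Definition K1 (u0 : R -> R) : R :=
  Rint 0 1 (fun x => cos (u0 x) * antider0 (fun y => sin (u0 y)) x).

(** u : [0,T) -> Lambda^1_k is a C^1 curve (in the H^1 topology), with time
    derivative v t in H^1, solving d_x d_t u = sin u, and u 0 = u0. *)
Definition is_solution (k : int) (T : R) (u : R -> R -> R) (u0 : R -> R) : Prop :=
  u 0 = u0 /\
  (forall t, 0 <= t < T -> Lambda1 k (u t)) /\
  exists v : R -> R -> R,
    (forall t, 0 <= t < T -> H1 (v t)) /\
    (forall t, 0 <= t < T -> forall e, 0 < e -> exists2 d, 0 < d &
       forall h, h != 0 -> 0 <= t + h < T -> `|h| < d ->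
         h1_lt (fun x => (u (t + h) x - u t x) / h - v t x) e) /\
    (forall t, 0 <= t < T -> forall e, 0 < e -> exists2 d, 0 < d &
       forall s, 0 <= s < T -> `|s - t| < d -> h1_lt (fun x => v s x - v t x) e) /\
    (forall t, 0 <= t < T -> wderiv (v t) (fun x => sin (u t x))).

End Defs.

From Pilot Require Import Defs.
From mathcomp Require Import all_boot all_order all_algebra.
From mathcomp Require Import all_classical all_reals all_analysis.
From mathcomp Require Import ring lra.
Import Order.TTheory GRing.Theory Num.Theory.
Import numFieldNormedType.Exports.
Local Open Scope classical_set_scope.
Local Open Scope ring_scope.

(* [Num.Theory] also exports a [Rint] (the integer qualifier). *)
Local Notation Rint := Defs.Rint.

(** Write [v = d_t u].  Since [v(t)] is periodic with [d_x v(t) = sin u(t)],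
    the mean of [sin u(t)] vanishes for every [t].  Differentiating in [t] at
    [0] -- a first-order Taylor estimate of [sin], integrated against the
    [L^2]-convergent difference quotients of [u] -- gives
    [int_0^1 cos(u_0) v(0) = 0].  Finally [v(0)] is an antiderivative of
    [sin u_0], so it differs from [d_x^-1 sin u_0] by a constant, which is
    killed by [int_0^1 cos u_0 = 0]. *)

Section trigonometric_estimates.
Context {R : realType}.

Lemma ler_norm_between (b c : R) :
  Num.min 0 b <= c <= Num.max 0 b -> `|c| <= `|b|.
Proof.
have [b0|b0] := leP 0 b; move=> /andP[c0 cb].
  by rewrite !ger0_norm.
by rewrite !ler0_norm ?lerN2 // ltW.
Qed.

Lemma ler_dist_bounded_derive (f df : R -> R) (a b M : R) :
  (forall x, is_derive x (1 : R) f (df x)) ->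
  (forall c, Num.min a b <= c <= Num.max a b -> `|df c| <= M) ->
  `|f b - f a| <= M * `|b - a|.
Proof.
move=> fd bd.
have cf : continuous f.
  by move=> x; apply/differentiable_continuous/derivable1_diffP; exact: ex_derive.
wlog ab : a b bd / a <= b.
  move=> H; have [/H|/ltW ba] := leP a b; first exact.
  rewrite distrC (distrC b); apply: H => // c; rewrite minC maxC; exact: bd.
have [c cab ->] := @MVT_segment R f df a b ab (fun x _ => fd x)
  (continuous_subspaceT cf).
rewrite normrM; apply: ler_wpM2r => //; apply: bd.
move: cab; rewrite in_itv /= => /andP[ac cb].
by rewrite (min_l ab) (max_r ab) ac cb.
Qed.

Lemma ler_dist_sin (x y : R) : `|sin x - sin y| <= `|x - y|.
Proof.
by rewrite -[X in _ <= X]mul1r; apply: ler_dist_bounded_derive => // c _; exact: cos_max.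
Qed.

Lemma ler_dist_cos (x y : R) : `|cos x - cos y| <= `|x - y|.
Proof.
rewrite -[X in _ <= X]mul1r.
apply: (@ler_dist_bounded_derive cos (fun x => - sin x)) => // c _.
by rewrite normrN; exact: sin_max.
Qed.

Lemma ler_sin_sub_id (b : R) : `|sin b - b| <= b ^+ 2.
Proof.
suff : `|(sin b - b) - (sin 0 - 0)| <= `|b| * `|b - 0|.
  by rewrite sin0 !subr0 -normrM -expr2 ger0_norm ?sqr_ge0.
apply: (@ler_dist_bounded_derive (fun s => sin s - s) (fun s => cos s - 1)) => c cb.
rewrite -cos0; apply: (le_trans (ler_dist_cos _ _)).
by rewrite subr0 ler_norm_between.
Qed.

Lemma ler_cos_sub1 (b : R) : `|cos b - 1| <= b ^+ 2.
Proof.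
suff : `|cos b - cos 0| <= `|b| * `|b - 0|.
  by rewrite cos0 !subr0 -normrM -expr2 ger0_norm ?sqr_ge0.
apply: (@ler_dist_bounded_derive cos (fun s => - sin s)) => // c cb.
rewrite normrN -[sin c]subr0 -sin0; apply: (le_trans (ler_dist_sin _ _)).
by rewrite subr0 ler_norm_between.
Qed.

Lemma ler_sin_taylor1 (a b : R) :
  `|sin (a + b) - sin a - cos a * b| <= 2 * b ^+ 2.
Proof.
have -> : sin (a + b) - sin a - cos a * b =
    sin a * (cos b - 1) + cos a * (sin b - b) by rewrite sinD; ring.
apply: (le_trans (ler_normD _ _)); rewrite !normrM mulr2n mulrDl mul1r.
by apply: lerD; rewrite -[X in _ <= X]mul1r;
  apply: ler_pM; rewrite ?sin_max ?cos_max ?ler_cos_sub1 ?ler_sin_sub_id.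
Qed.

(* AM-GM [|w| <= e/2 + w^2/(2e)] controls the first-order error [h cos(a) w],
   the Taylor remainder is bounded by [2 (h (v + w))^2 <= 4 h^2 (v^2 + w^2)]. *)
Lemma ler_sin_increment (a v w h e : R) : 0 < h -> 0 < e ->
  `|h * (cos a * v) - (sin (a + h * (v + w)) - sin a)| <=
    h * (e / 2 + w ^+ 2 / (2 * e) + 4 * h * (w ^+ 2 + v ^+ 2)).
Proof.
move=> h0 e0.
have := ler_sin_taylor1 a (h * (v + w)).
set rem := sin (a + _) - sin a - _ => rem_le.
have -> : h * (cos a * v) - (sin (a + h * (v + w)) - sin a) =
    - (h * cos a * w) - rem by rewrite /rem; ring.
have first_order : `|h * cos a * w| <= h * `|w|.
  rewrite !normrM (gtr0_norm h0) -mulrA ler_pM2l // -[X in _ <= X]mul1r.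
  by rewrite ler_wpM2r ?cos_max.
have am_gm : `|w| <= e / 2 + w ^+ 2 / (2 * e).
  have : 2 * e * `|w| <= w ^+ 2 + e ^+ 2.
    have := sqr_ge0 (`|w| - e); rewrite -[w ^+ 2]real_normK ?num_real //; nra.
  have -> : e / 2 + w ^+ 2 / (2 * e) = (w ^+ 2 + e ^+ 2) / (2 * e).
    by field; rewrite gt_eqF.
  by rewrite ler_pdivlMr ?mulr_gt0 // mulrC.
have remainder : `|rem| <= 4 * h ^+ 2 * (w ^+ 2 + v ^+ 2).
  by apply: (le_trans rem_le); have := sqr_ge0 (v - w); nra.
apply: (le_trans (ler_normB _ _)); rewrite normrN.
have : h * `|w| <= h * (e / 2 + w ^+ 2 / (2 * e)) by rewrite ler_pM2l.
nra.
Qed.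

End trigonometric_estimates.

Section unit_interval.
Context {R : realType}.
Local Notation mu := (@lebesgue_measure R).
Local Notation I := [set` `[(0:R), 1]].

Implicit Types f g : R -> R.

Lemma continuous01D f g : {within I, continuous f} -> {within I, continuous g} ->
  {within I, continuous (fun x => f x + g x)}.
Proof. by move=> cf cg x; exact: continuousD (cf x) (cg x). Qed.

Lemma continuous01B f g : {within I, continuous f} -> {within I, continuous g} ->
  {within I, continuous (fun x => f x - g x)}.
Proof. by move=> cf cg x; exact: continuousD (cf x) (continuousN (cg x)). Qed.

Lemma continuous01M f g : {within I, continuous f} -> {within I, continuous g} ->
  {within I, continuous (fun x => f x * g x)}.
Proof. by move=> cf cg x; exact: continuousM (cf x) (cg x). Qed.

Lemma continuous01Z (c : R) f : {within I, continuous f} ->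
  {within I, continuous (fun x => c * f x)}.
Proof. by apply: continuous01M; exact: cst_continuous. Qed.

Lemma continuous01X2 f : {within I, continuous f} ->
  {within I, continuous (fun x => f x ^+ 2)}.
Proof. by move=> cf; exact: continuous01M. Qed.

Lemma eq_continuous01 f g : (forall x, 0 <= x <= 1 -> f x = g x) ->
  {within I, continuous f} -> {within I, continuous g}.
Proof.
move=> fg; apply: subspace_eq_continuous => x.
by rewrite inE /= in_itv /=; exact: fg.
Qed.

Lemma continuous01_comp g f : continuous g -> {within I, continuous f} ->
  {within I, continuous (fun x => g (f x))}.
Proof. by move=> cg cf x; exact: continuous_comp (cf x) (cg _). Qed.

Lemma continuous01_sin f : {within I, continuous f} ->
  {within I, continuous (fun x => sin (f x))}.
Proof. exact/continuous01_comp/continuous_sin. Qed.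

Lemma continuous01_cos f : {within I, continuous f} ->
  {within I, continuous (fun x => cos (f x))}.
Proof. exact/continuous01_comp/continuous_cos. Qed.

Lemma continuous01_norm f : {within I, continuous f} ->
  {within I, continuous (fun x => `|f x|)}.
Proof. exact/continuous01_comp/norm_continuous. Qed.

Lemma continuous01_integrable f : {within I, continuous f} ->
  mu.-integrable I (EFin \o f).
Proof. by move=> cf; apply: continuous_compact_integrable => //; exact: segment_compact. Qed.

Let measurable01 : measurable I. Proof. exact: measurable_itv. Qed.

Lemma Rint01D f g : {within I, continuous f} -> {within I, continuous g} ->
  Rint 0 1 (fun x => f x + g x) = Rint 0 1 f + Rint 0 1 g.
Proof. by move=> cf cg; apply: RintegralD => //; exact: continuous01_integrable. Qed.

Lemma Rint01B f g : {within I, continuous f} -> {within I, continuous g} ->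
  Rint 0 1 (fun x => f x - g x) = Rint 0 1 f - Rint 0 1 g.
Proof. by move=> cf cg; apply: RintegralB => //; exact: continuous01_integrable. Qed.

Lemma Rint01Z (c : R) f : {within I, continuous f} ->
  Rint 0 1 (fun x => c * f x) = c * Rint 0 1 f.
Proof. by move=> cf; apply: RintegralZl => //; exact: continuous01_integrable. Qed.

Lemma Rint01_cst (c : R) : Rint 0 1 (fun _ => c) = c.
Proof.
rewrite /Rint Rintegral_cst //.
have := lebesgue_measure_itv `[(0:R), 1]; rewrite /= lte_fin ltr01 => ->.
by rewrite oppr0 adde0 mulr1.
Qed.

Lemma Rint01_sqr_ge0 f : 0 <= Rint 0 1 (fun x => f x ^+ 2).
Proof. by apply: Rintegral_ge0 => x _; exact: sqr_ge0. Qed.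

Lemma ler_norm_Rint01 f g : {within I, continuous f} -> {within I, continuous g} ->
  (forall x, 0 <= x <= 1 -> `|f x| <= g x) -> `|Rint 0 1 f| <= Rint 0 1 g.
Proof.
move=> cf cg fg; apply: (le_trans (le_normr_Rintegral _ _)) => //.
  exact: continuous01_integrable.
apply: le_Rintegral => //.
- exact/continuous01_integrable/continuous01_norm.
- exact: continuous01_integrable.
Qed.

End unit_interval.

Ltac continuity01 := repeat lazymatch goal with
  | |- context [from_subspace _ (fun _ => ?c)] => exact: cst_continuous
  | |- context [from_subspace _ (fun x => @?f x - @?g x)] => apply: continuous01B
  | |- context [from_subspace _ (fun x => @?f x + @?g x)] => apply: continuous01D
  | |- context [from_subspace _ (fun x => ?c * @?f x)] => apply: continuous01Z
  | |- context [from_subspace _ (fun x => @?f x * @?g x)] => apply: continuous01M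
  | |- context [from_subspace _ (fun x => @?f x ^+ 2)] => apply: continuous01X2
  | |- context [from_subspace _ (fun x => sin (@?f x))] => apply: continuous01_sin
  | |- context [from_subspace _ (fun x => cos (@?f x))] => apply: continuous01_cos
  | |- _ => assumption
  end.

Section weak_derivative.
Context {R : realType}.
Local Notation mu := (@lebesgue_measure R).
Local Notation I := [set` `[(0:R), 1]].

Implicit Types f g : R -> R.

Lemma wderiv_continuous f g : wderiv f g -> {within I, continuous f}.
Proof.
move=> [[_ [g_int _]] fE].
apply: (@eq_continuous01 _ (fun x => f 0 + parameterized_integral mu 0 x g)).
  by move=> x x01; rewrite (fE x x01).
apply: continuous01D; first exact: cst_continuous.
exact: parameterized_integral_continuous.
Qed.

Lemma Lambda1_continuous (k : int) f : Lambda1 k f -> {within I, continuous f}.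
Proof.
move=> [_ [g /wderiv_continuous cf]].
apply: (@eq_continuous01 _ (fun x => (f x - 2 * pi * k%:~R * x) + 2 * pi * k%:~R * x)).
  by move=> x _; rewrite subrK.
apply: continuous01D => //; apply: continuous01Z.
by apply: continuous_subspaceT => x; exact: cvg_id.
Qed.

Lemma Rint01_wderiv_periodic f g : wderiv f g -> f 1 = f 0 -> Rint 0 1 g = 0.
Proof.
by move=> [_ fE] f10; move: (fE 1); rewrite ler01 lexx f10 => /(_ isT); lra.
Qed.

Lemma h1_lt_Rint_sqr f e : h1_lt f e -> Rint 0 1 (fun x => f x ^+ 2) < e ^+ 2.
Proof. by move=> [g [_ lt_e]]; have := Rint01_sqr_ge0 g; lra. Qed.

Lemma K1_eq0 {u0 v : R -> R} : {within I, continuous u0} -> wderiv v (fun x => sin (u0 x)) ->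
  Rint 0 1 (fun x => cos (u0 x)) = 0 ->
  Rint 0 1 (fun x => cos (u0 x) * v x) = 0 -> K1 u0 = 0.
Proof.
move=> cu0 v_der mean_cos0 mean_cosv0.
have /wderiv_continuous cv := v_der; case: v_der => _ vE.
set c := v 0 + Rint 0 1 (fun y => Rint 0 y (fun z => sin (u0 z))).
have -> : K1 u0 = Rint 0 1 (fun x => cos (u0 x) * v x - c * cos (u0 x)).
  apply: eq_Rintegral => x; rewrite inE /= in_itv /= => x01.
  by rewrite /antider0 (vE x x01) /c; ring.
by rewrite Rint01B ?Rint01Z ?mean_cos0 ?mean_cosv0 ?mulr0 ?subr0 //; continuity01.
Qed.

End weak_derivative.

Section first_variation.
Context {R : realType}.
Local Notation I := [set` `[(0:R), 1]].

Lemma ler_Rint_sin_increment {a a' v : R -> R} (h e : R) : 0 < h -> 0 < e ->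
  {within I, continuous a} -> {within I, continuous a'} -> {within I, continuous v} ->
  `|h * Rint 0 1 (fun x => cos (a x) * v x) -
      (Rint 0 1 (fun x => sin (a' x)) - Rint 0 1 (fun x => sin (a x)))|
    <= h * (e / 2 + Rint 0 1 (fun x => ((a' x - a x) / h - v x) ^+ 2) / (2 * e)
       + 4 * h * (Rint 0 1 (fun x => ((a' x - a x) / h - v x) ^+ 2) +
                  Rint 0 1 (fun x => v x ^+ 2))).
Proof.
move=> h0 e0 ca ca' cv.
set w := fun x => (a' x - a x) / h - v x.
set W := Rint 0 1 (fun x => w x ^+ 2); set V := Rint 0 1 (fun x => v x ^+ 2).
have cw : {within I, continuous w} by rewrite /w; continuity01.
have -> : h * (e / 2 + W / (2 * e) + 4 * h * (W + V)) =
    Rint 0 1 (fun x => h * (e / 2) + (h / (2 * e) * w x ^+ 2 +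
                       4 * h ^+ 2 * (w x ^+ 2 + v x ^+ 2))).
  rewrite Rint01D ?Rint01_cst ?Rint01D ?Rint01Z ?Rint01D ?Rint01Z -?/W -?/V;
    try continuity01.
  by field; rewrite gt_eqF.
have -> : h * Rint 0 1 (fun x => cos (a x) * v x) -
    (Rint 0 1 (fun x => sin (a' x)) - Rint 0 1 (fun x => sin (a x))) =
    Rint 0 1 (fun x => h * (cos (a x) * v x) - (sin (a' x) - sin (a x))).
  by rewrite Rint01B ?Rint01B ?Rint01Z //; continuity01.
apply: ler_norm_Rint01; try continuity01.
move=> x _.
have -> : a' x = a x + h * (v x + w x) by rewrite /w; field; rewrite gt_eqF.
apply: le_trans (ler_sin_increment _ _ _ _ _ h0 e0) _.
by rewrite le_eqVlt; apply/orP; left; apply/eqP; field; rewrite gt_eqF.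
Qed.

Lemma Rint_cos_mul_derivative_eq0 {u : R -> R -> R} {v : R -> R} {T : R} :
  0 < T ->
  (forall t, 0 <= t < T -> {within I, continuous (u t)}) ->
  (forall t, 0 <= t < T -> Rint 0 1 (fun x => sin (u t x)) = 0) ->
  {within I, continuous v} ->
  (forall e, 0 < e -> exists2 d, 0 < d & forall h, 0 < h -> h < d -> h < T ->
     Rint 0 1 (fun x => ((u h x - u 0 x) / h - v x) ^+ 2) < e ^+ 2) ->
  Rint 0 1 (fun x => cos (u 0 x) * v x) = 0.
Proof.
move=> T0 cu mean_sin0 cv du.
set D := Rint 0 1 (fun x => cos (u 0 x) * v x).
have D_small e : 0 < e -> e <= 1 -> `|D| <= 2 * e.
  move=> e0 e1; have [d d0 du_e] := du e e0.
  set V := Rint 0 1 (fun x => v x ^+ 2); have V0 : 0 <= V := Rint01_sqr_ge0 v.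
  pose h := Num.min (Num.min (d / 2) (T / 2)) (e / (4 * (V + 1))).
  have h0 : 0 < h by rewrite !lt_min !divr_gt0 //; lra.
  have hd : h < d by apply: (le_lt_trans (y := d / 2)); rewrite ?ge_min ?lexx //; lra.
  have hT : h < T.
    by apply: (le_lt_trans (y := T / 2)); rewrite ?ge_min ?lexx ?orbT //; lra.
  have hV : 4 * h * (V + 1) <= e.
    have : h <= e / (4 * (V + 1)) by rewrite ge_min lexx orbT.
    by rewrite ler_pdivlMr; lra.
  have := du_e h h0 hd hT; set W := Rint 0 1 _ => We.
  have W0 : 0 <= W := Rint01_sqr_ge0 _.
  have t0 : 0 <= (0 : R) < T by rewrite lexx.
  have th : 0 <= h < T by rewrite ltW.
  have := ler_Rint_sin_increment h e h0 e0 (cu 0 t0) (cu h th) cv.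
  rewrite !mean_sin0 // subrr subr0 normrM gtr0_norm // -/W -/V.
  rewrite ler_pM2l // => D_le.
  have W_small : W / (2 * e) < e / 2.
    by rewrite ltr_pdivrMr ?mulr_gt0 // (_ : e / 2 * (2 * e) = e ^+ 2) //; field.
  have hW : h * W <= h by rewrite -[leRHS]mulr1 ler_pM2l //; nra.
  lra.
apply/eqP; rewrite -normr_eq0 eq_le normr_ge0 andbT.
apply/ler_addgt0Pr => eps eps0; rewrite add0r.
have m0 : 0 < Num.min (eps / 2) 1 by rewrite lt_min ltr01 andbT divr_gt0.
apply: le_trans (D_small _ m0 _) _; first by rewrite ge_min lexx orbT.
by rewrite -ler_pdivlMl // mulrC ge_min lexx.
Qed.

End first_variation.

Theorem lemma4p1 (R : realType) (k : int) (u0 : R -> R) :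
  Sigma1 k u0 ->
  (exists (T : R) (u : R -> R -> R), 0 < T /\ is_solution k T u u0) ->
  K1 u0 = 0.
Proof.
move=> [_ [_ mean_cos0]] [T [u [T0 [u_init [u_Lambda1 [v [v_H1 [du [_ v_der]]]]]]]]].
subst u0.
have t0 : 0 <= (0 : R) < T by rewrite lexx.
have cu t : 0 <= t < T -> {within [set` `[(0:R), 1]], continuous (u t)}.
  by move=> /u_Lambda1 /Lambda1_continuous.
have mean_sin0 t : 0 <= t < T -> Rint 0 1 (fun x => sin (u t x)) = 0.
  move=> tT; apply: Rint01_wderiv_periodic (v_der t tT) _.
  by rewrite -[1]add0r (v_H1 t tT).1.
apply: (K1_eq0 (cu 0 t0) (v_der 0 t0) mean_cos0).
apply: (Rint_cos_mul_derivative_eq0 T0 cu mean_sin0).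
  by have [_ [g /wderiv_continuous]] := v_H1 0 t0.
move=> e e0; have [d d0 du_e] := du 0 t0 e e0; exists d => // h h0 hd hT.
apply: h1_lt_Rint_sqr; have := du_e h (lt0r_neq0 h0); rewrite add0r.
by apply; [rewrite ltW | rewrite gtr0_norm].
Qed.
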